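(* In the setting described in the context, for every $i$ with $1\le i\le m-1$, $L_2(f_i)\le L_1(p_i,q_i)+L_1(q_i,p_{i+1})$, where $L_1$ is the $L_1$ distance and $L_2(f_i)$ is the Euclidean length of the phase $f_i$.
   Context: $P$ is a finite set of points in the plane, $s,t\in P$ distinct, and coordinates are chosen so that $t=(0,0)$ and $s$ lies in $C_2^t$ below the line $\ell_t^-=\{x+y=0\}$. Cones: $C_0^v=\{x\ge v_x,y\le v_y\}$, $C_1^v=\{x\ge v_x,y\ge v_y\}$, $C_2^v=\{x\le v_x,y\ge v_y\}$, $C_3^v=\{x\le v_x,y\le v_y\}$ with bisector directions $(1,-1),(1,1),(-1,1),(-1,-1)$. The $\Theta_4$-graph of $P$ has, for each $v\in P$ and cone $C_i^v$ containing a point of $P\setminus\{v\}$, a directed edge from $v$ to a point $w$ of $(P\setminus\{v\})\cap C_i^v$ minimizing the projection of $w-v$ onto the bisector direction (the neighbour of $v$ in $C_i^v$). Algorithm: for a vertex $v$, let $T(v,\ell_t^-)=C_1^v\cap\{x+y\le0\}$ if $v_x+v_y<0$, $T(v,\ell_t^-)=C_3^v\cap\{x+y\ge0\}$ if $v_x+v_y>0$, and $\{v\}$ if $v_x+v_y=0$; $v$ is clean if $T(v,\ell_t^-)$ contains no point of $P$ other than $v$. Starting at $v=s$, while $v\ne t$: if $v$ is not clean, take a sweeping step (go to the neighbour of $v$ in $C_1^v$, resp. $C_3^v$); otherwise take a greedy step (go to the neighbour of $v$ in the cone $C_i^v$ containing $t$). Let $(p_1,q_1),\dots,(p_{m-1},q_{m-1})$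 be, in order, the edges traversed by greedy steps, and set $p_m=t$. The phase $f_i$ ($1\le i\le m-1$) is the subpath of the algorithm's path from $p_i$ to $p_{i+1}$. *)

From mathcomp Require Import all_boot all_order all_algebra.
From mathcomp Require Import reals.
Set Implicit Arguments. Unset Strict Implicit. Unset Printing Implicit Defensive.
Import Order.TTheory GRing.Theory Num.Theory.
Local Open Scope ring_scope.

Section Theta4.
Variable R : realType.
Definition pt := (R * R)%type.

Definition inCone (i : nat) (v w : pt) : bool :=
  match i with
  | 0%N => (v.1 <= w.1) && (w.2 <= v.2)
  | 1%N => (v.1 <= w.1) && (v.2 <= w.2)
  | 2%N => (w.1 <= v.1) && (v.2 <= w.2)
  | _ => (w.1 <= v.1) && (w.2 <= v.2)
  end.

(* Projection of w - v onto the (unnormalised) bisector direction of C_i: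
   (1,-1), (1,1), (-1,1), (-1,-1).  Normalisation does not affect the argmin. *)
Definition bproj (i : nat) (v w : pt) : R :=
  match i with
  | 0%N => (w.1 - v.1) - (w.2 - v.2)
  | 1%N => (w.1 - v.1) + (w.2 - v.2)
  | 2%N => - (w.1 - v.1) + (w.2 - v.2)
  | _ => - (w.1 - v.1) - (w.2 - v.2)
  end.

(* nb is a Theta_4-graph of P: for every v in P and cone i < 4 containing
   a point of P other than v, nb v i is such a point minimising bproj. *)
Definition theta4_nb (P : seq pt) (nb : pt -> nat -> pt) : Prop :=
  forall v i, v \in P -> (i < 4)%N ->
    (exists w, [/\ w \in P, w != v & inCone i v w]) ->
    [/\ nb v i \in P, nb v i != v, inCone i v (nb v i) &
        forall w, w \in P -> w != v -> inCone i v w ->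
          bproj i v (nb v i) <= bproj i v w].

(* Membership of w in T(v, l_t^-) (with t = (0,0), l_t^- = {x + y = 0}). *)
Definition inT (v w : pt) : bool :=
  if v.1 + v.2 < 0 then inCone 1 v w && (w.1 + w.2 <= 0)
  else if 0 < v.1 + v.2 then inCone 3 v w && (0 <= w.1 + w.2)
  else w == v.

Definition clean (P : seq pt) (v : pt) : bool :=
  all (fun w => (w == v) || ~~ inT v w) P.

Definition sweepCone (v : pt) : nat := if v.1 + v.2 < 0 then 1%N else 3%N.

Definition algStep (P : seq pt) (nb : pt -> nat -> pt) (t v w : pt) : Prop :=
  if clean P v then exists2 i, (i < 4)%N & inCone i v t /\ w = nb v i
  else w = nb v (sweepCone v).

Definition algPath (P : seq pt) (nb : pt -> nat -> pt) (s t : pt) (path : seq pt) :=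
  [/\ (0 < size path)%N, nth t path 0 = s, nth t path (size path).-1 = t,
      (forall j, (j < (size path).-1)%N -> nth t path j != t) &
      (forall j, (j < (size path).-1)%N ->
         algStep P nb t (nth t path j) (nth t path j.+1))].

Definition L1dist (u v : pt) : R := `|u.1 - v.1| + `|u.2 - v.2|.
Definition L2dist (u v : pt) : R := Num.sqrt ((u.1 - v.1) ^+ 2 + (u.2 - v.2) ^+ 2).

Definition subpathL2 (d : pt) (path : seq pt) (j k : nat) : R :=
  \sum_(j <= l < k) L2dist (nth d path l) (nth d path l.+1).

Definition greedyIdx (P : seq pt) (d : pt) (path : seq pt) (j : nat) : bool :=
  (j < (size path).-1)%N && clean P (nth d path j).

End Theta4.

From mathcomp Require Import all_boot all_order all_algebra reals lra.
Import Order.TTheory GRing.Theory Num.Theory.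
Local Open Scope ring_scope.
Set Implicit Arguments. Unset Strict Implicit.

(* A phase is a greedy edge p -> q followed only by sweeping steps.  A
   sweeping step from a non-clean vertex lands on the same side of the line
   x + y = 0, and a non-clean vertex never lies on that line; hence all
   sweeping steps of a phase use the same cone, C_1 or C_3.  A walk whose steps
   all lie in one fixed quadrant is monotone in both coordinates, so its L1
   length telescopes to the L1 distance between its endpoints, and its
   Euclidean length is at most that. *)

Section Geometry.
Variable R : realType.

Lemma L2dist_le_L1dist (a b : pt R) : L2dist a b <= L1dist a b.
Proof.
rewrite /L2dist /L1dist; set x := a.1 - b.1; set y := a.2 - b.2.
rewrite -[X in _ <= X]ger0_norm ?addr_ge0 // -sqrtr_sqr ler_sqrt ?sqr_ge0 //.
rewrite -[x ^+ 2]real_normK ?num_real // -[y ^+ 2]real_normK ?num_real //.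
by rewrite sqrrD lerD2r lerDl mulrn_wge0 ?mulr_ge0.
Qed.

Lemma inCone_trans (i : nat) (a b c : pt R) :
  inCone i a b -> inCone i b c -> inCone i a c.
Proof.
by case: i => [|[|[|i]]] /andP[h1 h2] /andP[h3 h4]; apply/andP; split;
  apply: le_trans; eassumption.
Qed.

Lemma L1dist_inCone_add (i : nat) (a b c : pt R) :
  inCone i a b -> inCone i b c -> L1dist a c = L1dist a b + L1dist b c.
Proof.
have distl (u v : R) : u <= v -> `|u - v| = v - u.
  by move=> uv; rewrite distrC ger0_norm ?subr_ge0.
have distr (u v : R) : v <= u -> `|u - v| = u - v.
  by move=> vu; rewrite ger0_norm ?subr_ge0.
rewrite /L1dist; case: i => [|[|[|i]]] /andP[h1 h2] /andP[h3 h4] /=.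
- rewrite (distl _ _ h1) (distr _ _ h2) (distl _ _ h3) (distr _ _ h4).
  rewrite (distl _ _ (le_trans h1 h3)) (distr _ _ (le_trans h4 h2)); lra.
- rewrite (distl _ _ h1) (distl _ _ h2) (distl _ _ h3) (distl _ _ h4).
  rewrite (distl _ _ (le_trans h1 h3)) (distl _ _ (le_trans h2 h4)); lra.
- rewrite (distr _ _ h1) (distl _ _ h2) (distr _ _ h3) (distl _ _ h4).
  rewrite (distr _ _ (le_trans h3 h1)) (distl _ _ (le_trans h2 h4)); lra.
- rewrite (distr _ _ h1) (distr _ _ h2) (distr _ _ h3) (distr _ _ h4).
  rewrite (distr _ _ (le_trans h3 h1)) (distr _ _ (le_trans h4 h2)); lra.
Qed.

Lemma subpathL2_inCone_walk (i : nat) (d : pt R) (path : seq (pt R)) (a b : nat) :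
  (a <= b)%N ->
  (forall l, (a <= l < b)%N -> inCone i (nth d path l) (nth d path l.+1)) ->
  inCone i (nth d path a) (nth d path b) /\
  subpathL2 d path a b <= L1dist (nth d path a) (nth d path b).
Proof.
move=> /subnKC <-; elim: (b - a)%N => [|n IH] steps.
  rewrite addn0 /subpathL2 big_geq // /L1dist addr_ge0 //.
  by split=> //; case: i {steps} => [|[|[|i]]]; rewrite /inCone !lexx.
have [cone_n len_n] : inCone i (nth d path a) (nth d path (a + n)) /\
    subpathL2 d path a (a + n) <= L1dist (nth d path a) (nth d path (a + n)).
  by apply: IH => l /andP[al ln]; apply: steps; rewrite al addnS ltnS ltnW.
have step_n : inCone i (nth d path (a + n)) (nth d path (a + n).+1).
  by apply: steps; rewrite leq_addr addnS ltnSn.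
rewrite addnS /subpathL2 big_nat_recr ?leq_addr //=.
split; first exact: inCone_trans step_n.
rewrite (L1dist_inCone_add cone_n step_n) lerD //; exact: L2dist_le_L1dist.
Qed.

End Geometry.

Section Sweeping.
Variables (R : realType) (P : seq (pt R)) (nb : pt R -> nat -> pt R).
Hypothesis nbP : theta4_nb P nb.

Lemma clean_on_line (v : pt R) : v.1 + v.2 = 0 -> clean P v.
Proof. by move=> v0; apply/allP => w _; rewrite /inT v0 ltxx /= orbN. Qed.

Lemma sweepCone_lt4 (v : pt R) : (sweepCone v < 4)%N.
Proof. by rewrite /sweepCone; case: ifP. Qed.

Definition same_side (v w : pt R) : bool :=
  if v.1 + v.2 < 0 then w.1 + w.2 <= 0 else (0 < v.1 + v.2) && (0 <= w.1 + w.2).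

Lemma not_clean_witness (v : pt R) : ~~ clean P v ->
  exists w, [/\ w \in P, w != v, inCone (sweepCone v) v w & same_side v w].
Proof.
case/allPn => w wP /norP[wv /negbNE]; rewrite /inT /sweepCone /same_side.
case: ifP => _; first by case/andP; exists w.
case: ifP => _; first by case/andP; exists w.
by move/eqP => wv'; rewrite wv' eqxx in wv.
Qed.

(* The witness w of non-cleanliness lies on the same side of x + y = 0 as v,
   and the chosen neighbour is at most as far as w along the bisector, which
   for C_1 and C_3 is the direction normal to the line. *)
Lemma sweep_nb_spec (v : pt R) : v \in P -> ~~ clean P v ->
  let w := nb v (sweepCone v) in
  [/\ w \in P, inCone (sweepCone v) v w & same_side v w].
Proof.
move=> vP vnc /=; have [w [wP wv vw vw_side]] := not_clean_witness vnc.
have [nbwP _ nb_cone nb_min] :=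
  nbP vP (sweepCone_lt4 v) (ex_intro _ w (And3 wP wv vw)).
split=> //; have := nb_min w wP wv vw; move: vw_side.
rewrite /same_side /sweepCone /bproj; case: ifP => v_neg /=; first lra.
by case/andP => v_pos w_side; rewrite v_pos /=; lra.
Qed.

Lemma sweepCone_sweep_nb (v : pt R) : v \in P -> ~~ clean P v ->
  ~~ clean P (nb v (sweepCone v)) ->
  sweepCone (nb v (sweepCone v)) = sweepCone v.
Proof.
move=> vP vnc; have [_ _] := sweep_nb_spec vP vnc.
set w := nb v (sweepCone v) => vw_side wnc.
have w_off : w.1 + w.2 != 0 by apply: contraNneq wnc => /clean_on_line.
move: vw_side; rewrite /same_side /sweepCone; case: ifP => _.
  by move=> w_neg; rewrite lt_neqAle w_off w_neg.
by case/andP => _ w_nneg; rewrite ltNge w_nneg.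
Qed.

Section Run.
Variables (d : pt R) (path : seq (pt R)).

Definition sweep_step_at (l : nat) : Prop :=
  [/\ nth d path l \in P, ~~ clean P (nth d path l) &
      nth d path l.+1 = nb (nth d path l) (sweepCone (nth d path l))].

Lemma sweepCone_run (a b : nat) : (forall l, (a <= l < b)%N -> sweep_step_at l) ->
  forall l, (a <= l < b)%N -> sweepCone (nth d path l) = sweepCone (nth d path a).
Proof.
move=> run; elim=> [|l IH]; first by rewrite leqn0 => /andP[/eqP-> _].
case/andP; rewrite leq_eqVlt => /predU1P[-> // | al lb].
have al' : (a <= l)%N by rewrite -ltnS.
have [lP lnc lnext] : sweep_step_at l by apply: run; rewrite al' ltnW.
have [_ l1nc _] : sweep_step_at l.+1 by apply: run; rewrite ltnW.
by rewrite lnext sweepCone_sweep_nb -?lnext // IH // al' ltnW.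
Qed.

Lemma subpathL2_sweep_run (a b : nat) : (a <= b)%N ->
  (forall l, (a <= l < b)%N -> sweep_step_at l) ->
  subpathL2 d path a b <= L1dist (nth d path a) (nth d path b).
Proof.
move=> ab run.
suff steps : forall l, (a <= l < b)%N ->
    inCone (sweepCone (nth d path a)) (nth d path l) (nth d path l.+1).
  by case: (subpathL2_inCone_walk ab steps).
move=> l alb; have [lP lnc lnext] := run l alb.
have [_ lcone _] := sweep_nb_spec lP lnc.
by rewrite -(sweepCone_run run alb) lnext.
Qed.

End Run.

Lemma algPath_mem (s t : pt R) (path : seq (pt R)) :
  s \in P -> t \in P -> algPath P nb s t path ->
  forall l, (l < size path)%N -> nth t path l \in P.
Proof.
move=> sP tP [_ path0 _ not_t steps].
elim=> [|l IH] l_lt; first by rewrite path0.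
have l_lt' : (l < (size path).-1)%N by rewrite -ltnS prednK // (leq_ltn_trans _ l_lt).
have lP := IH (ltnW l_lt); have := steps l l_lt'; rewrite /algStep.
case: ifP => [_ [i i4 [ti ->]] | lnc ->].
  have tl : t != nth t path l by rewrite eq_sym not_t.
  by case: (nbP lP i4 (ex_intro _ t (And3 tP tl ti))).
by have [] := sweep_nb_spec lP (negbT lnc).
Qed.

Lemma algPath_sweep_step (s t : pt R) (path : seq (pt R)) (l : nat) :
  s \in P -> t \in P -> algPath P nb s t path ->
  (l < (size path).-1)%N -> ~~ clean P (nth t path l) -> sweep_step_at t path l.
Proof.
move=> sP tP walk l_lt lnc; split=> //.
  by apply: (algPath_mem sP tP walk); rewrite (leq_trans l_lt) ?leq_pred.
by have [_ _ _ _ steps] := walk; have := steps l l_lt; rewrite /algStep (negbTE lnc).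
Qed.

End Sweeping.

Theorem mainTheorem7 (R : realType) (P : seq (pt R)) (nb : pt R -> nat -> pt R)
    (s t : pt R) (path : seq (pt R)) :
  uniq P -> s \in P -> t \in P -> s != t ->
  t = (0, 0) ->
  s.1 <= 0 -> 0 <= s.2 -> s.1 + s.2 < 0 ->
  theta4_nb P nb ->
  algPath P nb s t path ->
  forall j k : nat,
    greedyIdx P t path j ->
    (j < k)%N -> (k <= (size path).-1)%N ->
    (forall l, (j < l < k)%N -> ~~ greedyIdx P t path l) ->
    (greedyIdx P t path k || (k == (size path).-1)) ->
    subpathL2 t path j k <=
      L1dist (nth t path j) (nth t path j.+1) + L1dist (nth t path j.+1) (nth t path k).
Proof.
move=> _ sP tP _ _ _ _ _ nbP walk j k _ jk k_le sweeping _.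
have run : forall l, (j.+1 <= l < k)%N -> sweep_step_at P nb t path l.
  move=> l /andP[jl lk]; have l_lt : (l < (size path).-1)%N by apply: leq_trans k_le.
  apply: (algPath_sweep_step nbP sP tP walk l_lt).
  by have := sweeping l; rewrite jl lk /greedyIdx l_lt; apply.
rewrite /subpathL2 big_ltn // lerD ?L2dist_le_L1dist //.
exact: (subpathL2_sweep_run nbP jk run).
Qed.
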